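(* Let $\lambda_1,\lambda_2\in\Delta$, $(s,p)=(\lambda_1+\lambda_2,\lambda_1\lambda_2)\in\Gamma$, and let $\beta\in\mathbb{C}$ with $|\beta|\le1$ be such that $s=\beta+\bar\beta p$, where, in the case $|p|=1$, $\beta=\tfrac12 s$. Let $a\in\mathbb{C}$. The following statements are equivalent: (1) $(a,s,p)\in\overline{\mathcal{P}}$; (2) $(a,s,p)\in\overline{\mathcal{P}_\mu}$; (3) $|a|\le\left|1-\dfrac{\tfrac12 s\bar\beta}{1+\sqrt{1-|\beta|^2}}\right|$; (4) $|a|\le\tfrac12|1-\bar\lambda_2\lambda_1|+\tfrac12(1-|\lambda_1|^2)^{1/2}(1-|\lambda_2|^2)^{1/2}$; (5) $|\Psi_z(a,s,p)|\le1$ for all $z\in\mathbb{D}$; (6) there exists $A\in\mathbb{C}^{2\times2}$ with $\|A\|\le1$ and $\pi(A)=(a,s,p)$; (7) there exists $A\in\mathbb{C}^{2\times2}$ with $\mu_E(A)\le1$ and $\pi(A)=(a,s,p)$.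
   Context: $\mathbb{D}$ is the open and $\Delta$ the closed unit disc; $\Gamma=\{(z+w,zw):|z|\le1,|w|\le1\}$ (closure of the symmetrised bidisc $\mathbb{G}$); for $(s,p)\in\Gamma$ and $z\in\mathbb{D}$ one has $1-sz+pz^2\neq0$. $\mathbb{B}$ is the open unit ball of $\mathbb{C}^{2\times2}$ (operator norm); $\pi(A)=(a_{21},\operatorname{tr}A,\det A)$; $\mathcal{P}=\pi(\mathbb{B})$ and $\overline{\mathcal{P}}$ is its closure in $\mathbb{C}^3$. $E=\{\begin{pmatrix}z&w\\0&z\end{pmatrix}:z,w\in\mathbb{C}\}$, $1/\mu_E(A)=\inf\{\|X\|:X\in E,\det(I-AX)=0\}$; $\mathcal{P}_\mu=\{\pi(A):\mu_E(A)<1\}$, with closure $\overline{\mathcal{P}_\mu}$. $\Psi_z(a,s,p)=a(1-|z|^2)/(1-sz+pz^2)$. *)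

From Stdlib Require Import Reals Lra.
Open Scope R_scope.

Definition Cx : Type := (R * R)%type.
Definition RtoC (x : R) : Cx := (x, 0).
Definition Czero : Cx := (0, 0).
Definition Cone : Cx := (1, 0).
Definition Cadd (z w : Cx) : Cx := (fst z + fst w, snd z + snd w).
Definition Copp (z : Cx) : Cx := (- fst z, - snd z).
Definition Csub (z w : Cx) : Cx := Cadd z (Copp w).
Definition Cmul (z w : Cx) : Cx :=
  (fst z * fst w - snd z * snd w, fst z * snd w + snd z * fst w).
Definition Cconj (z : Cx) : Cx := (fst z, - snd z).
Definition Cnorm2 (z : Cx) : R := fst z * fst z + snd z * snd z.
Definition Cmod (z : Cx) : R := sqrt (Cnorm2 z).
Definition Cinv (z : Cx) : Cx := (fst z / Cnorm2 z, - snd z / Cnorm2 z).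
Definition Cdiv (z w : Cx) : Cx := Cmul z (Cinv w).

Definition in_closed_disc (z : Cx) : Prop := Cmod z <= 1.
Definition in_open_disc (z : Cx) : Prop := Cmod z < 1.

Record M2 : Type := mkM2 { m11 : Cx; m12 : Cx; m21 : Cx; m22 : Cx }.
Definition V2 : Type := (Cx * Cx)%type.
Definition M2apply (A : M2) (v : V2) : V2 :=
  (Cadd (Cmul (m11 A) (fst v)) (Cmul (m12 A) (snd v)),
   Cadd (Cmul (m21 A) (fst v)) (Cmul (m22 A) (snd v))).
Definition M2mul (A B : M2) : M2 :=
  mkM2 (Cadd (Cmul (m11 A) (m11 B)) (Cmul (m12 A) (m21 B)))
       (Cadd (Cmul (m11 A) (m12 B)) (Cmul (m12 A) (m22 B)))
       (Cadd (Cmul (m21 A) (m11 B)) (Cmul (m22 A) (m21 B)))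
       (Cadd (Cmul (m21 A) (m12 B)) (Cmul (m22 A) (m22 B))).
Definition M2id : M2 := mkM2 Cone Czero Czero Cone.
Definition M2sub (A B : M2) : M2 :=
  mkM2 (Csub (m11 A) (m11 B)) (Csub (m12 A) (m12 B))
       (Csub (m21 A) (m21 B)) (Csub (m22 A) (m22 B)).
Definition M2det (A : M2) : Cx := Csub (Cmul (m11 A) (m22 A)) (Cmul (m12 A) (m21 A)).
Definition M2tr (A : M2) : Cx := Cadd (m11 A) (m22 A).

Definition vnorm (v : V2) : R := sqrt (Cnorm2 (fst v) + Cnorm2 (snd v)).

(** r is an upper bound for the operator norm: ||A|| <= r  (the infimum
    defining the operator norm is attained, so ||A|| <= r iff this holds). *)
Definition opnorm_le (A : M2) (r : R) : Prop :=
  0 <= r /\ forall v : V2, vnorm (M2apply A v) <= r * vnorm v.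
Definition opnorm_lt (A : M2) (r : R) : Prop :=
  exists r', r' < r /\ opnorm_le A r'.

Definition piA (A : M2) : Cx * Cx * Cx := (m21 A, M2tr A, M2det A).

Definition in_E (X : M2) : Prop := m21 X = Czero /\ m11 X = m22 X.

(** the set whose infimum of norms is 1/mu_E(A) *)
Definition mu_set (A : M2) (X : M2) : Prop :=
  in_E X /\ M2det (M2sub M2id (M2mul A X)) = Czero.

(** mu_E(A) <= 1  <->  1/mu_E(A) = inf { ||X|| : X in mu_set A } >= 1
    (inf of the empty set is +infinity, i.e. mu_E(A) = 0). *)
Definition muE_le1 (A : M2) : Prop :=
  forall X, mu_set A X -> ~ opnorm_lt X 1.
(** mu_E(A) < 1  <->  inf { ||X|| : X in mu_set A } > 1 *)
Definition muE_lt1 (A : M2) : Prop :=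
  exists r, 1 < r /\ forall X, mu_set A X -> ~ opnorm_lt X r.

Definition in_P (q : Cx * Cx * Cx) : Prop :=
  exists A, opnorm_lt A 1 /\ piA A = q.
Definition in_Pmu (q : Cx * Cx * Cx) : Prop :=
  exists A, muE_lt1 A /\ piA A = q.

Definition in_closure (S : Cx * Cx * Cx -> Prop) (q : Cx * Cx * Cx) : Prop :=
  forall eps, 0 < eps -> exists q', S q' /\
    Cmod (Csub (fst (fst q')) (fst (fst q))) < eps /\
    Cmod (Csub (snd (fst q')) (snd (fst q))) < eps /\
    Cmod (Csub (snd q') (snd q)) < eps.

Definition Psi (z a s p : Cx) : Cx :=
  Cdiv (Cmul a (RtoC (1 - Cnorm2 z)))
       (Cadd (Csub Cone (Cmul s z)) (Cmul p (Cmul z z))).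

(* Testing [mu_E(A) <= 1] against [X = [[z, w], [0, z]]] in [E] shows that every
   point of (7) satisfies |a| (1 - |z|^2) <= |1 - s z + p z^2| on the disc, which is
   (5) and survives limits, so (1) and (2) imply it as well.  Since
   1 - s z + p z^2 = (1 - l1 z)(1 - l2 z), evaluating at the Möbius image of a
   well-chosen point gives the bound (4).  Conversely, under (4) a unitary
   conjugate of [[l1, x], [0, l2]] with |x|^2 <= (1 - |l1|^2)(1 - |l2|^2) is a
   contraction with [pi = (a, s, p)]: this is (6), which implies (7) (a kernel
   vector of I - A X would be fixed by A X) and, after scaling by r < 1, (1) and (2).
   The right-hand sides of (3) and (4) agree, by an algebraic identity for
   beta = (s - conj(s) p) / (1 - |p|^2). *)

From Stdlib Require Import Reals Lra Nsatz Classical.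
Open Scope R_scope.

(** * Complex numbers *)

Ltac cx_unfold :=
  simpl in *; unfold Cdiv, Cinv, Csub in *;
  unfold Cadd, Copp, Cmul, Cconj, Cnorm2, RtoC, Cone, Czero in *; simpl in *.

Lemma Cnorm2_ge0 z : 0 <= Cnorm2 z.
Proof. destruct z; cx_unfold; nra. Qed.

Lemma Cmod_ge0 z : 0 <= Cmod z.
Proof. apply sqrt_pos. Qed.

Lemma Cmod_sqr z : Cmod z * Cmod z = Cnorm2 z.
Proof. apply sqrt_sqrt, Cnorm2_ge0. Qed.

Lemma sqrt_eq_of_sqr x y : 0 <= y -> y * y = x -> sqrt x = y.
Proof. intros Hy <-; apply sqrt_square, Hy. Qed.

Lemma Cmod_eq z x : 0 <= x -> Cnorm2 z = x * x -> Cmod z = x.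
Proof. intros Hx E; apply sqrt_eq_of_sqr; [exact Hx | symmetry; exact E]. Qed.

Lemma Cnorm2_pos z : z <> Czero -> 0 < Cnorm2 z.
Proof.
  destruct z as [x y]; cx_unfold; intro H.
  destruct (Req_dec x 0), (Req_dec y 0); subst; try nra.
  now contradict H.
Qed.

Lemma Cmod_pos z : z <> Czero -> 0 < Cmod z.
Proof.
  intro H; pose proof (Cnorm2_pos _ H); rewrite <- Cmod_sqr in *.
  pose proof (Cmod_ge0 z); nra.
Qed.

Lemma Cnorm2_le1 z : Cmod z <= 1 -> Cnorm2 z <= 1.
Proof. intro H; rewrite <- Cmod_sqr; pose proof (Cmod_ge0 z); nra. Qed.

Lemma Cnorm2_lt1 z : Cmod z < 1 -> Cnorm2 z < 1.
Proof. intro H; rewrite <- Cmod_sqr; pose proof (Cmod_ge0 z); nra. Qed.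

Lemma Cmod_lt1 z : Cnorm2 z < 1 -> Cmod z < 1.
Proof. intro H; rewrite <- Cmod_sqr in H; pose proof (Cmod_ge0 z); nra. Qed.

Lemma Cnorm2_mul z w : Cnorm2 (Cmul z w) = Cnorm2 z * Cnorm2 w.
Proof. destruct z, w; cx_unfold; ring. Qed.

Lemma Cmod_mul z w : Cmod (Cmul z w) = Cmod z * Cmod w.
Proof. unfold Cmod; rewrite Cnorm2_mul; apply sqrt_mult; apply Cnorm2_ge0. Qed.

Lemma Cnorm2_conj z : Cnorm2 (Cconj z) = Cnorm2 z.
Proof. destruct z; cx_unfold; ring. Qed.

Lemma Cmod_conj z : Cmod (Cconj z) = Cmod z.
Proof. unfold Cmod; now rewrite Cnorm2_conj. Qed.

Lemma Cnorm2_RtoC t : Cnorm2 (RtoC t) = t * t.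
Proof. cx_unfold; ring. Qed.

Lemma Cmod_RtoC t : 0 <= t -> Cmod (RtoC t) = t.
Proof. intro Ht; apply Cmod_eq; [exact Ht | apply Cnorm2_RtoC]. Qed.

Lemma Cmod_0 : Cmod Czero = 0.
Proof. apply Cmod_eq; [lra | cx_unfold; ring]. Qed.

Lemma Cmod_opp z : Cmod (Copp z) = Cmod z.
Proof. unfold Cmod; f_equal; destruct z; cx_unfold; ring. Qed.

Lemma Cmod_sub_sym z w : Cmod (Csub z w) = Cmod (Csub w z).
Proof. unfold Cmod; f_equal; destruct z, w; cx_unfold; ring. Qed.

Lemma Cre_mul_conj_le z w : fst z * fst w + snd z * snd w <= Cmod z * Cmod w.
Proof.
  pose proof (Cmod_sqr z); pose proof (Cmod_sqr w).
  pose proof (Cmod_ge0 z); pose proof (Cmod_ge0 w).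
  destruct z as [z1 z2], w as [w1 w2]; cx_unfold.
  assert (Hlag : (z1 * w1 + z2 * w2) * (z1 * w1 + z2 * w2) + (z1 * w2 - z2 * w1) * (z1 * w2 - z2 * w1)
                 = (Cmod (z1, z2) * Cmod (w1, w2)) * (Cmod (z1, z2) * Cmod (w1, w2))).
  { replace (Cmod (z1, z2) * Cmod (w1, w2) * (Cmod (z1, z2) * Cmod (w1, w2)))
      with (Cmod (z1, z2) * Cmod (z1, z2) * (Cmod (w1, w2) * Cmod (w1, w2))) by ring.
    rewrite H, H0; ring. }
  set (m := Cmod (z1, z2) * Cmod (w1, w2)) in *.
  assert (0 <= m) by (apply Rmult_le_pos; apply Cmod_ge0).
  clearbody m; clear H H0.
  pose proof (Rle_0_sqr (z1 * w2 - z2 * w1)); unfold Rsqr in *.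
  apply Rnot_lt_le; intro Hlt; nra.
Qed.

Lemma Cmod_triangle z w : Cmod (Cadd z w) <= Cmod z + Cmod w.
Proof.
  pose proof (Cmod_ge0 z); pose proof (Cmod_ge0 w); pose proof (Cmod_ge0 (Cadd z w)).
  pose proof (Cmod_sqr z); pose proof (Cmod_sqr w); pose proof (Cmod_sqr (Cadd z w)).
  pose proof (Cre_mul_conj_le z w).
  destruct z as [z1 z2], w as [w1 w2]; cx_unfold; nra.
Qed.

Lemma Cmod_sub_le z w : Cmod z <= Cmod w + Cmod (Csub z w).
Proof.
  replace z with (Cadd w (Csub z w)) at 1 by (destruct z, w; cx_unfold; f_equal; ring).
  apply Cmod_triangle.
Qed.

Lemma Cmul_comm z w : Cmul z w = Cmul w z.
Proof. destruct z, w; cx_unfold; f_equal; ring. Qed.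

Lemma Cmul_div_r z w : w <> Czero -> Cmul (Cdiv z w) w = z.
Proof.
  intro H; pose proof (Cnorm2_pos _ H).
  destruct z, w; cx_unfold; f_equal; field; lra.
Qed.

Lemma Cmod_div z w : w <> Czero -> Cmod (Cdiv z w) = Cmod z / Cmod w.
Proof.
  intro H; pose proof (Cmod_pos _ H).
  apply (Rmult_eq_reg_r (Cmod w)); [|lra].
  rewrite <- Cmod_mul, Cmul_div_r by exact H; field; lra.
Qed.

(** * Operator norm of 2x2 matrices *)

Definition vnorm2 (v : V2) : R := Cnorm2 (fst v) + Cnorm2 (snd v).

Lemma vnorm2_ge0 v : 0 <= vnorm2 v.
Proof. unfold vnorm2; pose proof (Cnorm2_ge0 (fst v)); pose proof (Cnorm2_ge0 (snd v)); lra. Qed.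

Lemma vnorm_sqr v : vnorm v * vnorm v = vnorm2 v.
Proof. apply sqrt_sqrt, vnorm2_ge0. Qed.

Lemma vnorm_ge0 v : 0 <= vnorm v.
Proof. apply sqrt_pos. Qed.

Lemma vnorm2_pos v : fst v <> Czero \/ snd v <> Czero -> 0 < vnorm2 v.
Proof.
  unfold vnorm2; pose proof (Cnorm2_ge0 (fst v)); pose proof (Cnorm2_ge0 (snd v)).
  intros [Hv | Hv]; pose proof (Cnorm2_pos _ Hv); lra.
Qed.

Lemma opnorm_le_sqr A r :
  opnorm_le A r -> forall v, vnorm2 (M2apply A v) <= r * r * vnorm2 v.
Proof.
  intros [Hr HA] v; specialize (HA v); rewrite <- !vnorm_sqr.
  pose proof (vnorm_ge0 (M2apply A v)); pose proof (vnorm_ge0 v); nra.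
Qed.

Lemma opnorm_le_of_sqr A r : 0 <= r ->
  (forall v, vnorm2 (M2apply A v) <= r * r * vnorm2 v) -> opnorm_le A r.
Proof.
  intros Hr H; split; [exact Hr|]; intro v; specialize (H v).
  rewrite <- !vnorm_sqr in H.
  pose proof (vnorm_ge0 (M2apply A v)).
  assert (0 <= r * vnorm v) by (apply Rmult_le_pos; [exact Hr | apply vnorm_ge0]).
  apply Rnot_lt_le; intro; nra.
Qed.

Lemma opnorm_le_weaken A r r' : opnorm_le A r -> r <= r' -> opnorm_le A r'.
Proof.
  intros [Hr H] Hrr; split; [lra|]; intro v; specialize (H v).
  pose proof (vnorm_ge0 v); nra.
Qed.

Lemma opnorm_lt_le A r : opnorm_lt A r -> opnorm_le A r.
Proof. intros [r' [Hr' H]]; eapply opnorm_le_weaken; [exact H | lra]. Qed.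

Lemma M2apply_mul A B v : M2apply (M2mul A B) v = M2apply A (M2apply B v).
Proof.
  destruct A as [[] [] [] []], B as [[] [] [] []], v as [[] []].
  unfold M2apply, M2mul; cx_unfold; f_equal; f_equal; ring.
Qed.

Definition M2scale (r : R) (A : M2) : M2 :=
  mkM2 (Cmul (RtoC r) (m11 A)) (Cmul (RtoC r) (m12 A))
       (Cmul (RtoC r) (m21 A)) (Cmul (RtoC r) (m22 A)).

Lemma opnorm_le_scale A r t : 0 <= r -> opnorm_le A t -> opnorm_le (M2scale r A) (r * t).
Proof.
  intros Hr HA; pose proof (opnorm_le_sqr _ _ HA) as H; destruct HA as [Ht _].
  apply opnorm_le_of_sqr; [nra|]; intro v; specialize (H v).
  assert (E : vnorm2 (M2apply (M2scale r A) v) = r * r * vnorm2 (M2apply A v)).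
  { destruct A as [[] [] [] []], v as [[] []].
    unfold vnorm2, M2apply, M2scale; cx_unfold; ring. }
  rewrite E; assert (0 <= r * r) by nra; nra.
Qed.

Lemma piA_scale r A : piA (M2scale r A) =
  (Cmul (RtoC r) (m21 A), Cmul (RtoC r) (M2tr A), Cmul (RtoC (r * r)) (M2det A)).
Proof.
  destruct A as [[] [] [] []]; unfold piA, M2scale, M2tr, M2det; cx_unfold.
  f_equal; [f_equal|]; f_equal; ring.
Qed.

Lemma M2mul_scale A X r : M2mul (M2scale r A) X = M2mul A (M2scale r X).
Proof.
  destruct A as [[] [] [] []], X as [[] [] [] []].
  unfold M2mul, M2scale; cx_unfold; f_equal; f_equal; ring.
Qed.

Definition M2tri (l1 x l2 : Cx) : M2 := mkM2 l1 x Czero l2.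

(* Multiplied by [1 - a^2], the gap is the sum of squares
   ((1 - a^2) X - a b Y)^2 + ((1 - a^2)(1 - c^2) - b^2) Y^2. *)
Lemma tri_contraction_real a b c X Y :
  0 <= a <= 1 -> 0 <= c <= 1 -> 0 <= b -> b * b <= (1 - a * a) * (1 - c * c) ->
  0 <= X -> 0 <= Y -> (a * X + b * Y) * (a * X + b * Y) + c * c * (Y * Y) <= X * X + Y * Y.
Proof.
  intros Ha Hc Hb Hbb HX HY.
  destruct (Req_dec a 1) as [-> | Ha1].
  { replace ((1 - 1 * 1) * (1 - c * c)) with 0 in Hbb by ring.
    assert (b = 0) by nra; subst.
    assert (0 <= (1 - c * c) * (Y * Y)) by (apply Rmult_le_pos; nra); nra. }
  assert (Ha' : 0 < 1 - a * a) by nra.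
  assert (0 <= ((1 - a * a) * (1 - c * c) - b * b) * (Y * Y)) by (apply Rmult_le_pos; nra).
  pose proof (Rle_0_sqr ((1 - a * a) * X - a * b * Y)); unfold Rsqr in *.
  apply (Rmult_le_reg_l (1 - a * a)); [lra | nra].
Qed.

Lemma opnorm_le1_tri l1 x l2 : Cmod l1 <= 1 -> Cmod l2 <= 1 ->
  Cnorm2 x <= (1 - Cnorm2 l1) * (1 - Cnorm2 l2) -> opnorm_le (M2tri l1 x l2) 1.
Proof.
  intros H1 H2 Hx; apply opnorm_le_of_sqr; [lra|]; intros [v1 v2].
  unfold M2apply, vnorm2; simpl.
  replace (Cadd (Cmul Czero v1) (Cmul l2 v2)) with (Cmul l2 v2)
    by (destruct l2, v1, v2; cx_unfold; f_equal; ring).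
  pose proof (Cmod_triangle (Cmul l1 v1) (Cmul x v2)) as T; rewrite !Cmod_mul in T.
  rewrite <- !Cmod_sqr, !Cmod_mul; rewrite <- !Cmod_sqr in Hx.
  pose proof (Cmod_ge0 v1); pose proof (Cmod_ge0 v2); pose proof (Cmod_ge0 x).
  pose proof (Cmod_ge0 l1); pose proof (Cmod_ge0 l2).
  pose proof (Cmod_ge0 (Cadd (Cmul l1 v1) (Cmul x v2))).
  pose proof (tri_contraction_real (Cmod l1) (Cmod x) (Cmod l2) (Cmod v1) (Cmod v2)
    ltac:(lra) ltac:(lra) ltac:(lra) Hx ltac:(lra) ltac:(lra)).
  nra.
Qed.

(* Scale [[z, w], [0, z]] by [r = (1 + |w| + |z|^2) / 2 < 1]; the quotient is a
   contraction because [r^2 - |w| r - |z|^2 >= 0]. *)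
Lemma opnorm_lt1_tri_diag z w : Cmod w + Cnorm2 z < 1 -> opnorm_lt (M2tri z w z) 1.
Proof.
  intro Hwz.
  pose proof (Cmod_ge0 w); pose proof (Cmod_ge0 z); pose proof (Cmod_sqr z).
  set (r := (1 + Cmod w + Cnorm2 z) / 2).
  assert (Hr0 : 0 < r) by (unfold r; nra).
  assert (Hzr : Cmod z <= r) by (unfold r; nra).
  assert (Hwr : Cmod w * r <= r * r - Cnorm2 z) by (unfold r; nra).
  set (u := RtoC (/ r)).
  assert (Hu : Cmod u = / r) by (apply Cmod_RtoC; left; apply Rinv_0_lt_compat, Hr0).
  exists r; split; [unfold r; lra|].
  replace (M2tri z w z) with (M2scale r (M2tri (Cmul u z) (Cmul u w) (Cmul u z))).
  2:{ unfold M2scale, M2tri, u; simpl; f_equal;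
      destruct z, w; cx_unfold; f_equal; field; lra. }
  rewrite <- (Rmult_1_r r) at 2; apply opnorm_le_scale; [lra|].
  assert (Huz : Cmod (Cmul u z) <= 1).
  { rewrite Cmod_mul, Hu; apply (Rmult_le_reg_l r); [lra|]; field_simplify; lra. }
  apply opnorm_le1_tri; try exact Huz.
  rewrite <- !Cmod_sqr, !Cmod_mul, Hu.
  assert (Hk : / r * r = 1) by (field; lra).
  assert (Hk0 : 0 < / r) by (apply Rinv_0_lt_compat, Hr0).
  set (k := / r) in *; clearbody k.
  assert (Hrk : r * r * (k * k) = 1)
    by (replace (r * r * (k * k)) with ((k * r) * (k * r)) by ring; rewrite Hk; ring).
  assert (Hm : 0 <= Cmod w * k <= 1 - Cmod z * k * (Cmod z * k)).
  { split; [nra|].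
    replace (Cmod w * k) with (Cmod w * r * (k * k))
      by (replace (Cmod w * r * (k * k)) with (Cmod w * k * (k * r)) by ring; rewrite Hk; ring).
    replace (1 - Cmod z * k * (Cmod z * k)) with ((r * r - Cnorm2 z) * (k * k))
      by (rewrite <- H1, <- Hrk; ring).
    apply Rmult_le_compat_r; nra. }
  nra.
Qed.

(** * The Schwarz-type bound *)

Lemma M2det_eq0_kernel M : M2det M = Czero ->
  exists v, (fst v <> Czero \/ snd v <> Czero) /\ M2apply M v = (Czero, Czero).
Proof.
  destruct M as [a b c d]; unfold M2det, M2apply; simpl; intro Hd.
  destruct (classic (a <> Czero \/ b <> Czero)) as [Hab | Hab].
  - exists (Copp b, a); split.
    + destruct Hab as [Ha | Hb]; [now right | left].
      intro E; apply Hb; destruct b; cx_unfold; injection E; intros; f_equal; lra.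
    + destruct a, b, c, d; cx_unfold; injection Hd; intros; f_equal; f_equal; nra.
  - assert (a = Czero /\ b = Czero) as [-> ->] by (split; apply NNPP; tauto).
    destruct (classic (c <> Czero \/ d <> Czero)) as [Hcd | Hcd].
    + exists (d, Copp c); split.
      * destruct Hcd as [Hc | Hd']; [right | now left].
        intro E; apply Hc; destruct c; cx_unfold; injection E; intros; f_equal; lra.
      * destruct c, d; cx_unfold; injection Hd; intros; f_equal; f_equal; nra.
    + assert (c = Czero /\ d = Czero) as [-> ->] by (split; apply NNPP; tauto).
      exists (Cone, Czero); split.
      * left; cx_unfold; intro E; injection E; lra.
      * cx_unfold; f_equal; f_equal; ring.
Qed.

(* A kernel vector [v] of [I - A X] satisfies [A (X v) = v], which is impossible
   when [|A| <= 1] and [|X| < 1]. *)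
Lemma opnorm_le1_muE_le1 A : opnorm_le A 1 -> muE_le1 A.
Proof.
  intros HA X [_ Hdet] [r [Hr HX]].
  destruct (M2det_eq0_kernel _ Hdet) as [v [Hv Hker]].
  assert (Hfix : M2apply A (M2apply X v) = v).
  { rewrite <- M2apply_mul; revert Hker; generalize (M2mul A X) as B; intro B.
    destruct B as [[] [] [] []], v as [[] []]; unfold M2apply, M2sub, M2id; cx_unfold.
    intro E; injection E; intros; f_equal; f_equal; lra. }
  pose proof (opnorm_le_sqr _ _ HA (M2apply X v)) as H1; rewrite Hfix in H1.
  pose proof (opnorm_le_sqr _ _ HX v) as H2.
  pose proof (vnorm2_pos _ Hv); destruct HX as [Hr0 _].
  assert (r * r < 1) by nra; nra.
Qed.

Lemma muE_lt1_le1 A : muE_lt1 A -> muE_le1 A.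
Proof.
  intros [r [Hr HA]] X HX [r' [Hr' HX']].
  apply (HA X HX); exists r'; split; [lra | exact HX'].
Qed.

(* [revpoly (tr A) (det A) z = det (I - z A)]; it is the denominator of [Psi]. *)
Definition revpoly (s p z : Cx) : Cx := Cadd (Csub Cone (Cmul s z)) (Cmul p (Cmul z z)).

Definition schwarz_bound (a s p : Cx) : Prop :=
  forall z, in_open_disc z -> Cmod a * (1 - Cnorm2 z) <= Cmod (revpoly s p z).

Lemma det_I_sub_mul_tri_diag A z w :
  M2det (M2sub M2id (M2mul A (M2tri z w z))) =
  Csub (revpoly (M2tr A) (M2det A) z) (Cmul (m21 A) w).
Proof.
  destruct A as [[] [] [] []], z, w.
  unfold M2det, M2sub, M2id, M2mul, M2tri, M2tr, revpoly; cx_unfold; f_equal; ring.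
Qed.

(* If the bound failed at [z], then [X = [[z, w], [0, z]]] with [a w = revpoly s p z]
   would be a strict contraction in [E] making [I - A X] singular. *)
Lemma muE_le1_schwarz A a s p : muE_le1 A -> piA A = (a, s, p) -> schwarz_bound a s p.
Proof.
  intros HA Hpi z Hz; unfold piA in Hpi; injection Hpi as Ha Hs Hp.
  pose proof (Cnorm2_lt1 _ Hz); pose proof (Cmod_ge0 (revpoly s p z)).
  apply Rnot_lt_le; intro Hlt.
  assert (Ha0 : a <> Czero) by (intro E; rewrite E, Cmod_0 in Hlt; nra).
  set (w := Cdiv (revpoly s p z) a).
  assert (Hw : Cmod w < 1 - Cnorm2 z).
  { unfold w; rewrite Cmod_div by exact Ha0; pose proof (Cmod_pos _ Ha0).
    apply (Rmult_lt_reg_r (Cmod a)); [lra|]; field_simplify; lra. }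
  apply (HA (M2tri z w z)).
  - split; [split; reflexivity|].
    rewrite det_I_sub_mul_tri_diag, Ha, Hs, Hp.
    replace (Cmul a w) with (revpoly s p z) by (symmetry; rewrite Cmul_comm; apply Cmul_div_r, Ha0).
    destruct (revpoly s p z); cx_unfold; f_equal; ring.
  - apply opnorm_lt1_tri_diag; lra.
Qed.

(** * Closures *)

Lemma Cmod_scale_sub r z : 0 <= r <= 1 -> Cmod (Csub (Cmul (RtoC r) z) z) = (1 - r) * Cmod z.
Proof.
  intro Hr; pose proof (Cmod_ge0 z); apply Cmod_eq; [nra|].
  replace ((1 - r) * Cmod z * ((1 - r) * Cmod z)) with ((1 - r) * (1 - r) * (Cmod z * Cmod z))
    by ring.
  rewrite Cmod_sqr; destruct z; cx_unfold; ring.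
Qed.

Lemma exists_scale_near1 (x y z eps : R) : 0 <= x -> 0 <= y -> 0 <= z -> 0 < eps ->
  exists r, 0 < r < 1 /\ (1 - r) * x < eps /\ (1 - r) * y < eps /\ (1 - r * r) * z < eps.
Proof.
  intros Hx Hy Hz He.
  set (M := 1 + x + y + z).
  set (d := Rmin (1 / 2) (eps / (2 * M))).
  assert (Hd1 : d <= 1 / 2) by apply Rmin_l.
  assert (Hd2 : d * (2 * M) <= eps).
  { pose proof (Rmin_r (1 / 2) (eps / (2 * M))) as H; fold d in H.
    apply (Rmult_le_compat_r (2 * M)) in H; [|unfold M; lra].
    unfold Rdiv in H; rewrite Rmult_assoc, Rinv_l in H by (unfold M; lra); lra. }
  assert (Hd0 : 0 < d)
    by (apply Rmin_glb_lt; [lra | apply Rdiv_lt_0_compat; unfold M; lra]).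
  exists (1 - d); unfold M in Hd2; repeat split; nra.
Qed.

Lemma in_closure_of_scale (S : Cx * Cx * Cx -> Prop) A :
  (forall r, 0 < r < 1 -> S (piA (M2scale r A))) -> in_closure S (piA A).
Proof.
  intros HS eps He.
  destruct (exists_scale_near1 (Cmod (m21 A)) (Cmod (M2tr A)) (Cmod (M2det A)) eps
              (Cmod_ge0 _) (Cmod_ge0 _) (Cmod_ge0 _) He) as [r [Hr [H1 [H2 H3]]]].
  exists (piA (M2scale r A)); split; [exact (HS r Hr)|].
  rewrite piA_scale; unfold piA; cbn [fst snd].
  rewrite !Cmod_scale_sub by nra; lra.
Qed.

Lemma opnorm_le1_in_closure_P A : opnorm_le A 1 -> in_closure in_P (piA A).
Proof.
  intros HA; apply in_closure_of_scale; intros r Hr.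
  exists (M2scale r A); split; [|reflexivity].
  exists (r * 1); split; [lra | apply opnorm_le_scale; [lra | exact HA]].
Qed.

(* [r A] has [mu_E < 1] with margin [1/r]: a singular [I - (r A) X] with
   [|X| < 1/r] is a singular [I - A (r X)] with [|r X| < 1]. *)
Lemma opnorm_le1_in_closure_Pmu A : opnorm_le A 1 -> in_closure in_Pmu (piA A).
Proof.
  intros HA; apply in_closure_of_scale; intros r Hr.
  exists (M2scale r A); split; [|reflexivity].
  exists (/ r); split; [rewrite <- Rinv_1; apply Rinv_lt_contravar; lra|].
  intros X [[HX21 HXd] Hdet] [r' [Hr' HX]].
  apply (opnorm_le1_muE_le1 A HA (M2scale r X)).
  - split; [split|].
    + unfold M2scale; simpl; rewrite HX21; cx_unfold; f_equal; ring.
    + unfold M2scale; simpl; now rewrite HXd.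
    + now rewrite <- M2mul_scale.
  - exists (r * r'); split; [|apply opnorm_le_scale; [lra | exact HX]].
    apply (Rmult_lt_compat_l r) in Hr'; [|lra].
    rewrite Rinv_r in Hr' by lra; lra.
Qed.

Lemma revpoly_sub_le s p s' p' z : Cmod z < 1 ->
  Cmod (Csub (revpoly s' p' z) (revpoly s p z)) <= Cmod (Csub s' s) + Cmod (Csub p' p).
Proof.
  intro Hz.
  replace (Csub (revpoly s' p' z) (revpoly s p z))
    with (Cadd (Copp (Cmul (Csub s' s) z)) (Cmul (Csub p' p) (Cmul z z)))
    by (unfold revpoly; destruct s, p, s', p', z; cx_unfold; f_equal; ring).
  eapply Rle_trans; [apply Cmod_triangle|].
  rewrite Cmod_opp, !Cmod_mul.
  pose proof (Cmod_ge0 z); pose proof (Cmod_ge0 (Csub s' s)); pose proof (Cmod_ge0 (Csub p' p)).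
  assert (Cmod z * Cmod z <= 1) by nra.
  assert (Cmod (Csub p' p) * (Cmod z * Cmod z) <= Cmod (Csub p' p)) by nra.
  nra.
Qed.

Lemma in_closure_schwarz (S : Cx * Cx * Cx -> Prop) a s p :
  (forall a' s' p', S (a', s', p') -> schwarz_bound a' s' p') ->
  in_closure S (a, s, p) -> schwarz_bound a s p.
Proof.
  intros HS Hcl z Hz; pose proof (Cnorm2_lt1 _ Hz); pose proof (Cnorm2_ge0 z).
  apply Rnot_lt_le; intro Hlt.
  set (g := Cmod a * (1 - Cnorm2 z) - Cmod (revpoly s p z)).
  destruct (Hcl (g / 4)) as [[[a' s'] p'] [HSq [Ha [Hs Hp]]]]; [unfold g; lra|].
  cbn [fst snd] in Ha, Hs, Hp.
  specialize (HS _ _ _ HSq z Hz).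
  pose proof (Cmod_sub_le a a') as Ea; rewrite Cmod_sub_sym in Ea.
  pose proof (Cmod_sub_le (revpoly s' p' z) (revpoly s p z)).
  pose proof (revpoly_sub_le s p s' p' z Hz).
  assert (Cmod a * (1 - Cnorm2 z) <= Cmod a' * (1 - Cnorm2 z) + g / 4) by nra.
  unfold g in *; lra.
Qed.

Lemma in_P_schwarz a s p : in_P (a, s, p) -> schwarz_bound a s p.
Proof.
  intros [A [HA Hpi]].
  exact (muE_le1_schwarz A a s p (opnorm_le1_muE_le1 A (opnorm_lt_le A 1 HA)) Hpi).
Qed.

Lemma in_Pmu_schwarz a s p : in_Pmu (a, s, p) -> schwarz_bound a s p.
Proof. intros [A [HA Hpi]]; exact (muE_le1_schwarz A a s p (muE_lt1_le1 A HA) Hpi). Qed.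

(** * From the Schwarz-type bound to (4) *)

Lemma revpoly_factor l1 l2 z :
  revpoly (Cadd l1 l2) (Cmul l1 l2) z = Cmul (Csub Cone (Cmul l1 z)) (Csub Cone (Cmul l2 z)).
Proof. unfold revpoly; destruct l1, l2, z; cx_unfold; f_equal; ring. Qed.

Lemma Cmod_one_sub_mul_pos l z : Cmod l <= 1 -> Cmod z < 1 -> 0 < Cmod (Csub Cone (Cmul l z)).
Proof.
  intros Hl Hz; pose proof (Cmod_sub_le Cone (Cmul l z)) as H.
  rewrite Cmod_mul in H; replace (Cmod Cone) with 1 in H by (symmetry; apply Cmod_RtoC; lra).
  pose proof (Cmod_ge0 l); pose proof (Cmod_ge0 z); nra.
Qed.

Lemma Rdiv_le1_iff x y : 0 < y -> (x / y <= 1 <-> x <= y).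
Proof.
  intro Hy; assert (E : x / y * y = x) by (field; lra).
  split; intro H; [rewrite <- E; nra | apply Rnot_lt_le; intro; nra].
Qed.

Lemma schwarz_bound_iff_Psi l1 l2 a : in_closed_disc l1 -> in_closed_disc l2 ->
  (schwarz_bound a (Cadd l1 l2) (Cmul l1 l2) <->
   forall z, in_open_disc z -> Cmod (Psi z a (Cadd l1 l2) (Cmul l1 l2)) <= 1).
Proof.
  intros H1 H2.
  assert (Hmod : forall z, in_open_disc z ->
            (Cmod (Psi z a (Cadd l1 l2) (Cmul l1 l2)) <= 1 <->
             Cmod a * (1 - Cnorm2 z) <= Cmod (revpoly (Cadd l1 l2) (Cmul l1 l2) z))).
  { intros z Hz; pose proof (Cnorm2_lt1 _ Hz).
    assert (Hd : 0 < Cmod (revpoly (Cadd l1 l2) (Cmul l1 l2) z)).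
    { rewrite revpoly_factor, Cmod_mul.
      apply Rmult_lt_0_compat; apply Cmod_one_sub_mul_pos; assumption. }
    assert (Hne : revpoly (Cadd l1 l2) (Cmul l1 l2) z <> Czero)
      by (intro E; rewrite E, Cmod_0 in Hd; lra).
    unfold Psi; fold (revpoly (Cadd l1 l2) (Cmul l1 l2) z).
    rewrite Cmod_div, Cmod_mul, Cmod_RtoC by (assumption || lra).
    apply Rdiv_le1_iff, Hd. }
  split; intros H z Hz; apply (Hmod z Hz), H, Hz.
Qed.

Definition defect (l1 l2 : Cx) : R := sqrt (1 - Cnorm2 l1) * sqrt (1 - Cnorm2 l2).

Definition Kbound (l1 l2 : Cx) : R :=
  (1 / 2) * Cmod (Csub Cone (Cmul (Cconj l2) l1)) + (1 / 2) * defect l1 l2.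

Lemma defect_ge0 l1 l2 : 0 <= defect l1 l2.
Proof. apply Rmult_le_pos; apply sqrt_pos. Qed.

Lemma defect_sqr l1 l2 : Cmod l1 <= 1 -> Cmod l2 <= 1 ->
  defect l1 l2 * defect l1 l2 = (1 - Cnorm2 l1) * (1 - Cnorm2 l2).
Proof.
  intros H1 H2; pose proof (Cnorm2_le1 _ H1); pose proof (Cnorm2_le1 _ H2); unfold defect.
  replace (sqrt (1 - Cnorm2 l1) * sqrt (1 - Cnorm2 l2) * (sqrt (1 - Cnorm2 l1) * sqrt (1 - Cnorm2 l2)))
    with (sqrt (1 - Cnorm2 l1) * sqrt (1 - Cnorm2 l1) * (sqrt (1 - Cnorm2 l2) * sqrt (1 - Cnorm2 l2)))
    by ring.
  rewrite !sqrt_sqrt; lra.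
Qed.

Lemma Cnorm2_one_sub_conj_mul l1 l2 :
  Cnorm2 (Csub Cone (Cmul (Cconj l2) l1)) =
  Cnorm2 (Csub l1 l2) + (1 - Cnorm2 l1) * (1 - Cnorm2 l2).
Proof. destruct l1, l2; cx_unfold; ring. Qed.

Lemma one_sub_mul_div_mul l x q : q <> Czero ->
  Cmul (Csub Cone (Cmul l (Cdiv x q))) q = Csub q (Cmul l x).
Proof.
  intro Hq; rewrite <- (Cmul_div_r x q Hq) at 2.
  generalize (Cdiv x q); intro u; destruct l, u, q; cx_unfold; f_equal; ring.
Qed.

(* Evaluate the bound at the image [z0 = (zeta + conj l1) / (1 + l1 zeta)] of
   [zeta] under the disc automorphism exchanging [0] and [conj l1]. *)
Lemma schwarz_bound_mobius a l1 l2 zeta : Cmod l1 < 1 -> Cmod zeta < 1 ->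
  schwarz_bound a (Cadd l1 l2) (Cmul l1 l2) ->
  Cmod a * (1 - Cnorm2 zeta) <=
  Cmod (Csub (Csub Cone (Cmul l2 (Cconj l1))) (Cmul (Csub l2 l1) zeta)).
Proof.
  intros Hl1 Hzeta H.
  pose proof (Cnorm2_lt1 _ Hl1); pose proof (Cnorm2_lt1 _ Hzeta).
  pose proof (Cnorm2_ge0 l1); pose proof (Cnorm2_ge0 zeta).
  set (q := Cadd Cone (Cmul l1 zeta)).
  assert (Hq : q <> Czero).
  { intro E; assert (E1 : Cnorm2 (Cmul l1 zeta) = 1)
      by (unfold q in E; destruct (Cmul l1 zeta); cx_unfold; injection E; intros; nra).
    rewrite Cnorm2_mul in E1; nra. }
  pose proof (Cnorm2_pos _ Hq) as Hq2.
  set (z0 := Cdiv (Cadd zeta (Cconj l1)) q).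
  assert (L1 : Cmul (Csub Cone (Cmul l1 z0)) q = RtoC (1 - Cnorm2 l1)).
  { unfold z0; rewrite one_sub_mul_div_mul by exact Hq.
    unfold q; destruct l1, zeta; cx_unfold; f_equal; ring. }
  assert (L2 : Cmul (Csub Cone (Cmul l2 z0)) q =
               Csub (Csub Cone (Cmul l2 (Cconj l1))) (Cmul (Csub l2 l1) zeta)).
  { unfold z0; rewrite one_sub_mul_div_mul by exact Hq.
    unfold q; destruct l1, l2, zeta; cx_unfold; f_equal; ring. }
  assert (L3 : (1 - Cnorm2 z0) * Cnorm2 q = (1 - Cnorm2 l1) * (1 - Cnorm2 zeta)).
  { unfold z0; rewrite Rmult_minus_distr_r, <- Cnorm2_mul, Cmul_div_r by exact Hq.
    unfold q; destruct l1, zeta; cx_unfold; ring. }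
  assert (Hz0 : in_open_disc z0).
  { apply Cmod_lt1; apply (Rmult_lt_reg_r (Cnorm2 q)); [exact Hq2|].
    assert (0 < (1 - Cnorm2 l1) * (1 - Cnorm2 zeta)) by nra; nra. }
  specialize (H z0 Hz0); rewrite revpoly_factor, Cmod_mul in H.
  apply (f_equal Cmod) in L1, L2; rewrite Cmod_mul, Cmod_RtoC in L1 by lra.
  rewrite Cmod_mul in L2; rewrite <- L2.
  apply (Rmult_le_reg_l (1 - Cnorm2 l1)); [lra|].
  replace ((1 - Cnorm2 l1) * (Cmod a * (1 - Cnorm2 zeta)))
    with (Cmod a * (1 - Cnorm2 z0) * Cnorm2 q) by (rewrite Rmult_assoc, L3; ring).
  replace ((1 - Cnorm2 l1) * (Cmod (Csub Cone (Cmul l2 z0)) * Cmod q))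
    with (Cmod (Csub Cone (Cmul l1 z0)) * Cmod (Csub Cone (Cmul l2 z0)) * Cnorm2 q)
    by (rewrite <- L1, <- Cmod_sqr; ring).
  apply Rmult_le_compat_r; lra.
Qed.

Lemma exists_extremal_zeta (c d : Cx) sg : c <> Czero -> 0 < sg <= 1 ->
  Cnorm2 d = (1 - sg * sg) * Cnorm2 c ->
  exists zeta, Cmod zeta < 1 /\ Csub c (Cmul d zeta) = Cmul c (RtoC sg) /\
               (1 - Cnorm2 zeta) * (1 + sg) = 2 * sg.
Proof.
  intros Hc Hsg Hd; pose proof (Cnorm2_pos _ Hc).
  set (nu := Cdiv d c).
  assert (Hnu : Cmul nu c = d) by (apply Cmul_div_r, Hc).
  assert (Hnu2 : Cnorm2 nu = 1 - sg * sg).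
  { apply (Rmult_eq_reg_r (Cnorm2 c)); [|lra].
    rewrite <- Cnorm2_mul, Hnu, Hd; ring. }
  set (zeta := Cmul (Cconj nu) (RtoC (/ (1 + sg)))).
  assert (Hz2 : Cnorm2 zeta = (1 - sg) / (1 + sg)).
  { unfold zeta; rewrite Cnorm2_mul, Cnorm2_conj, Cnorm2_RtoC, Hnu2; field; lra. }
  exists zeta; repeat split.
  - apply Cmod_lt1; rewrite Hz2; apply (Rmult_lt_reg_r (1 + sg)); [lra|].
    field_simplify; lra.
  - rewrite <- Hnu; unfold zeta.
    replace (Cmul (Cmul nu c) (Cmul (Cconj nu) (RtoC (/ (1 + sg)))))
      with (Cmul c (RtoC (Cnorm2 nu / (1 + sg))))
      by (destruct nu, c; cx_unfold; f_equal; field; lra).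
    rewrite Hnu2; destruct c; cx_unfold; f_equal; field; lra.
  - rewrite Hz2; field; lra.
Qed.

Lemma schwarz_bound_Kbound_interior a l1 l2 : Cmod l1 < 1 -> Cmod l2 < 1 ->
  schwarz_bound a (Cadd l1 l2) (Cmul l1 l2) -> Cmod a <= Kbound l1 l2.
Proof.
  intros Hl1 Hl2 H.
  pose proof (Cnorm2_lt1 _ Hl1); pose proof (Cnorm2_lt1 _ Hl2).
  set (c := Csub Cone (Cmul l2 (Cconj l1))).
  set (N := Cmod (Csub Cone (Cmul (Cconj l2) l1))).
  assert (HNc : Cmod c = N)
    by (unfold N; rewrite <- Cmod_conj; f_equal; unfold c; destruct l1, l2; cx_unfold; f_equal; ring).
  set (del := defect l1 l2).
  assert (Hd2 : del * del = (1 - Cnorm2 l1) * (1 - Cnorm2 l2)) by (apply defect_sqr; lra).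
  assert (Hd0 : 0 <= del) by apply defect_ge0.
  assert (Hd : 0 < del) by nra.
  assert (HN2 : N * N = Cnorm2 (Csub l2 l1) + del * del)
    by (unfold N; rewrite Cmod_sqr, Cnorm2_one_sub_conj_mul, <- Hd2; f_equal;
        destruct l1, l2; cx_unfold; ring).
  pose proof (Cnorm2_ge0 (Csub l2 l1)).
  assert (HN0 : 0 <= N) by apply Cmod_ge0.
  assert (HdN : del <= N) by nra.
  assert (Hc : c <> Czero) by (intro E; rewrite E, Cmod_0 in HNc; lra).
  set (sg := del / N).
  assert (Hdsg : del = N * sg) by (unfold sg; field; lra).
  assert (Hsg : 0 < sg <= 1)
    by (split; [apply Rdiv_lt_0_compat; lra | apply Rdiv_le1_iff; lra]).
  destruct (exists_extremal_zeta c (Csub l2 l1) sg Hc Hsg) as [zeta [Hzeta [Hcz Hz2]]].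
  { rewrite <- (Cmod_sqr c), HNc; rewrite Hdsg in HN2; nra. }
  pose proof (schwarz_bound_mobius a l1 l2 zeta Hl1 Hzeta H) as Hb.
  fold c in Hb; rewrite Hcz, Cmod_mul, HNc, Cmod_RtoC in Hb by lra.
  pose proof (Cmod_ge0 a).
  assert (Cmod a * (2 * sg) <= N * sg * (1 + sg))
    by (rewrite <- Hz2, <- Rmult_assoc; apply Rmult_le_compat_r; lra).
  unfold Kbound; fold N del; nra.
Qed.

Lemma schwarz_bound_scale a l1 l2 r : 0 <= r <= 1 ->
  schwarz_bound a (Cadd l1 l2) (Cmul l1 l2) ->
  schwarz_bound a (Cadd (Cmul (RtoC r) l1) (Cmul (RtoC r) l2))
                  (Cmul (Cmul (RtoC r) l1) (Cmul (RtoC r) l2)).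
Proof.
  intros Hr H z Hz; pose proof (Cmod_ge0 z).
  assert (Hrz : in_open_disc (Cmul (RtoC r) z))
    by (unfold in_open_disc in *; rewrite Cmod_mul, Cmod_RtoC by lra; nra).
  specialize (H _ Hrz).
  replace (revpoly (Cadd (Cmul (RtoC r) l1) (Cmul (RtoC r) l2))
                   (Cmul (Cmul (RtoC r) l1) (Cmul (RtoC r) l2)) z)
    with (revpoly (Cadd l1 l2) (Cmul l1 l2) (Cmul (RtoC r) z))
    by (unfold revpoly; destruct l1, l2, z; cx_unfold; f_equal; ring).
  rewrite Cnorm2_mul, Cnorm2_RtoC in H.
  pose proof (Cnorm2_ge0 z); pose proof (Cmod_ge0 a).
  assert (r * r <= 1) by nra.
  assert (Cmod a * (1 - Cnorm2 z) <= Cmod a * (1 - r * r * Cnorm2 z))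
    by (apply Rmult_le_compat_l; nra).
  lra.
Qed.

Lemma sqrt_one_sub_scale_le x r e : 0 <= x <= 1 -> 0 <= e -> r * r = 1 - e * e ->
  sqrt (1 - r * r * x) <= sqrt (1 - x) + e.
Proof.
  intros Hx He Hr; pose proof (sqrt_pos (1 - x)); pose proof (sqrt_sqrt (1 - x) ltac:(lra)).
  rewrite <- (sqrt_square (sqrt (1 - x) + e)) by lra.
  apply sqrt_le_1_alt; rewrite Hr; nra.
Qed.

Lemma Kbound_scale_le l1 l2 r e : Cmod l1 <= 1 -> Cmod l2 <= 1 ->
  0 <= e <= 1 -> 0 <= r -> r * r = 1 - e * e ->
  Kbound (Cmul (RtoC r) l1) (Cmul (RtoC r) l2) <= Kbound l1 l2 + 2 * e.
Proof.
  intros H1 H2 He Hr0 Hr.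
  pose proof (Cnorm2_le1 _ H1); pose proof (Cnorm2_le1 _ H2).
  pose proof (Cnorm2_ge0 l1); pose proof (Cnorm2_ge0 l2).
  pose proof (Cmod_ge0 l1); pose proof (Cmod_ge0 l2).
  assert (HN : Cmod (Csub Cone (Cmul (Cconj (Cmul (RtoC r) l2)) (Cmul (RtoC r) l1)))
               <= Cmod (Csub Cone (Cmul (Cconj l2) l1)) + e).
  { replace (Csub Cone (Cmul (Cconj (Cmul (RtoC r) l2)) (Cmul (RtoC r) l1)))
      with (Cadd (Csub Cone (Cmul (Cconj l2) l1)) (Cmul (RtoC (1 - r * r)) (Cmul (Cconj l2) l1)))
      by (destruct l1, l2; cx_unfold; f_equal; ring).
    eapply Rle_trans; [apply Cmod_triangle|].
    rewrite !Cmod_mul, Cmod_RtoC, Cmod_conj by nra.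
    assert (Cmod l2 * Cmod l1 <= 1) by nra.
    assert ((1 - r * r) * (Cmod l2 * Cmod l1) <= e) by nra.
    lra. }
  unfold Kbound, defect; rewrite !Cnorm2_mul, !Cnorm2_RtoC.
  pose proof (sqrt_one_sub_scale_le (Cnorm2 l1) r e ltac:(lra) ltac:(lra) Hr).
  pose proof (sqrt_one_sub_scale_le (Cnorm2 l2) r e ltac:(lra) ltac:(lra) Hr).
  pose proof (sqrt_le_1_alt (1 - Cnorm2 l1) 1 ltac:(lra)).
  pose proof (sqrt_le_1_alt (1 - Cnorm2 l2) 1 ltac:(lra)).
  rewrite sqrt_1 in *.
  pose proof (sqrt_pos (1 - Cnorm2 l1)); pose proof (sqrt_pos (1 - Cnorm2 l2)).
  pose proof (sqrt_pos (1 - r * r * Cnorm2 l1)); pose proof (sqrt_pos (1 - r * r * Cnorm2 l2)).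
  assert (sqrt (1 - r * r * Cnorm2 l1) * sqrt (1 - r * r * Cnorm2 l2)
          <= sqrt (1 - Cnorm2 l1) * sqrt (1 - Cnorm2 l2) + 3 * e) by nra.
  lra.
Qed.

(* Shrink [l1, l2] by [r < 1] close to [1] to reach the interior case. *)
Lemma schwarz_bound_Kbound a l1 l2 : in_closed_disc l1 -> in_closed_disc l2 ->
  schwarz_bound a (Cadd l1 l2) (Cmul l1 l2) -> Cmod a <= Kbound l1 l2.
Proof.
  intros H1 H2 H; apply Rnot_lt_le; intro Hlt.
  set (e := Rmin (1 / 2) ((Cmod a - Kbound l1 l2) / 4)).
  assert (He1 : e <= 1 / 2) by apply Rmin_l.
  assert (He2 : e <= (Cmod a - Kbound l1 l2) / 4) by apply Rmin_r.
  assert (He0 : 0 < e) by (apply Rmin_glb_lt; lra).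
  set (r := sqrt (1 - e * e)).
  assert (Hr2 : r * r = 1 - e * e) by (apply sqrt_sqrt; nra).
  assert (Hr0 : 0 <= r) by apply sqrt_pos.
  unfold in_closed_disc in H1, H2; pose proof (Cmod_ge0 l1); pose proof (Cmod_ge0 l2).
  assert (Hint : Cmod a <= Kbound (Cmul (RtoC r) l1) (Cmul (RtoC r) l2)).
  { apply schwarz_bound_Kbound_interior;
      [rewrite Cmod_mul, Cmod_RtoC by lra; nra .. |].
    apply schwarz_bound_scale; [nra | exact H]. }
  pose proof (Kbound_scale_le l1 l2 r e H1 H2 ltac:(lra) Hr0 Hr2).
  lra.
Qed.

(** * From (4) to a contraction *)

(* [Umat u v] is unitary when [|u|^2 + |v|^2 = 1], with adjoint [Uadj u v]. *)
Definition Umat (u v : Cx) : M2 := mkM2 u (Copp (Cconj v)) v (Cconj u).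
Definition Uadj (u v : Cx) : M2 := mkM2 (Cconj u) (Cconj v) (Copp v) u.

Lemma vnorm2_Umat u v y : vnorm2 (M2apply (Umat u v) y) = (Cnorm2 u + Cnorm2 v) * vnorm2 y.
Proof. destruct u, v, y as [[] []]; unfold vnorm2, M2apply, Umat; cx_unfold; ring. Qed.

Lemma vnorm2_Uadj u v y : vnorm2 (M2apply (Uadj u v) y) = (Cnorm2 u + Cnorm2 v) * vnorm2 y.
Proof. destruct u, v, y as [[] []]; unfold vnorm2, M2apply, Uadj; cx_unfold; ring. Qed.

Lemma opnorm_le1_unitary_conj u v T : Cnorm2 u + Cnorm2 v = 1 -> opnorm_le T 1 ->
  opnorm_le (M2mul (M2mul (Umat u v) T) (Uadj u v)) 1.
Proof.
  intros Huv HT; apply opnorm_le_of_sqr; [lra|]; intro y.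
  rewrite !M2apply_mul, vnorm2_Umat, Huv.
  pose proof (opnorm_le_sqr _ _ HT (M2apply (Uadj u v) y)) as H.
  rewrite vnorm2_Uadj, Huv in H; lra.
Qed.

Lemma piA_unitary_conj_tri u v l1 x l2 : Cnorm2 u + Cnorm2 v = 1 ->
  piA (M2mul (M2mul (Umat u v) (M2tri l1 x l2)) (Uadj u v)) =
  (Csub (Cmul (Csub l1 l2) (Cmul (Cconj u) v)) (Cmul x (Cmul v v)), Cadd l1 l2, Cmul l1 l2).
Proof.
  intro Huv.
  transitivity (Csub (Cmul (Csub l1 l2) (Cmul (Cconj u) v)) (Cmul x (Cmul v v)),
                Cmul (RtoC (Cnorm2 u + Cnorm2 v)) (Cadd l1 l2),
                Cmul (RtoC ((Cnorm2 u + Cnorm2 v) * (Cnorm2 u + Cnorm2 v))) (Cmul l1 l2)).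
  - destruct u, v, l1, x, l2; unfold piA, M2mul, Umat, Uadj, M2tri, M2tr, M2det; cx_unfold.
    f_equal; [f_equal|]; f_equal; ring.
  - rewrite Huv; destruct l1, l2; cx_unfold; f_equal; [f_equal|]; f_equal; ring.
Qed.

Lemma exists_unimodular_align (d alpha : Cx) : Cnorm2 alpha = 1 ->
  exists w, Cnorm2 w = 1 /\ Cmul d w = Cmul alpha (RtoC (Cmod d)).
Proof.
  intro Ha; destruct (classic (d = Czero)) as [-> | Hd].
  - exists Cone; rewrite Cmod_0; split; cx_unfold; [ring | f_equal; ring].
  - pose proof (Cmod_pos _ Hd); pose proof (Cmod_sqr d).
    exists (Cmul (Cconj d) (Cmul alpha (RtoC (/ Cmod d)))); split.
    + rewrite !Cnorm2_mul, Cnorm2_conj, Cnorm2_RtoC, Ha, <- H0; field; lra.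
    + transitivity (Cmul alpha (RtoC (Cnorm2 d * / Cmod d))).
      * destruct d, alpha; cx_unfold; f_equal; ring.
      * rewrite <- H0; do 2 f_equal; field; lra.
Qed.

(* Conjugate [[l1, x], [0, l2]] by a unitary with [conj(u) v = y w], where the
   unimodular [w] turns [(l1 - l2) w] in the direction of [a]; the free entry [x]
   then adjusts the modulus of the lower-left entry. *)
Lemma contraction_of_param l1 l2 a t y : in_closed_disc l1 -> in_closed_disc l2 ->
  a <> Czero -> 0 < t <= 1 -> 0 <= y -> t * (1 - t) = y * y ->
  Rabs (Cmod (Csub l1 l2) * y - Cmod a) <= defect l1 l2 * t ->
  exists A, opnorm_le A 1 /\ piA A = (a, Cadd l1 l2, Cmul l1 l2).
Proof.
  intros H1 H2 Ha Ht Hy Hty Hk.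
  pose proof (Cmod_pos _ Ha) as Hma; pose proof (Cmod_sqr a).
  set (alpha := Cmul a (RtoC (/ Cmod a))).
  assert (Hal : Cnorm2 alpha = 1)
    by (unfold alpha; rewrite Cnorm2_mul, Cnorm2_RtoC, <- H; field; lra).
  assert (Hala : Cmul alpha (RtoC (Cmod a)) = a)
    by (unfold alpha; destruct a; cx_unfold; f_equal; field; lra).
  destruct (exists_unimodular_align (Csub l1 l2) alpha Hal) as [w [Hw Hdw]].
  set (k := (Cmod (Csub l1 l2) * y - Cmod a) / t).
  assert (Hkt : k * t = Cmod (Csub l1 l2) * y - Cmod a) by (unfold k; field; lra).
  assert (Hkk : k * k <= (1 - Cnorm2 l1) * (1 - Cnorm2 l2)).
  { rewrite <- defect_sqr by assumption; pose proof (defect_ge0 l1 l2).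
    assert (Rabs k <= defect l1 l2).
    { apply (Rmult_le_reg_r t); [lra|].
      rewrite <- (Rabs_pos_eq t) at 1 by lra; rewrite <- Rabs_mult, Hkt; exact Hk. }
    assert (k * k = Rabs k * Rabs k)
      by (rewrite <- Rabs_mult; symmetry; apply Rabs_pos_eq; nra).
    pose proof (Rabs_pos k); nra. }
  set (x := Cmul (Cmul alpha (RtoC k)) (Cmul (Cconj w) (Cconj w))).
  set (u := RtoC (sqrt (1 - t))); set (v := Cmul (RtoC (sqrt t)) w).
  assert (Huv : Cnorm2 u + Cnorm2 v = 1)
    by (unfold u, v; rewrite Cnorm2_mul, !Cnorm2_RtoC, Hw, !sqrt_sqrt by lra; ring).
  assert (Hq : sqrt (1 - t) * sqrt t = y)
    by (rewrite <- sqrt_mult by lra; rewrite Rmult_comm, Hty; apply sqrt_square, Hy).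
  exists (M2mul (M2mul (Umat u v) (M2tri l1 x l2)) (Uadj u v)); split.
  - apply opnorm_le1_unitary_conj; [exact Huv|].
    apply opnorm_le1_tri; try assumption.
    unfold x; rewrite !Cnorm2_mul, Cnorm2_RtoC, !Cnorm2_conj, Hw, Hal; lra.
  - rewrite piA_unitary_conj_tri by exact Huv; f_equal; f_equal.
    replace (Cmul (Csub l1 l2) (Cmul (Cconj u) v)) with (Cmul (RtoC y) (Cmul (Csub l1 l2) w))
      by (rewrite <- Hq; unfold u, v; destruct l1, l2, w; cx_unfold; f_equal; ring).
    replace (Cmul x (Cmul v v))
      with (Cmul alpha (RtoC (k * (sqrt t * sqrt t) * (Cnorm2 w * Cnorm2 w))))
      by (unfold x, v; destruct alpha, w; cx_unfold; f_equal; ring).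
    rewrite Hdw, Hw, sqrt_sqrt by lra.
    rewrite <- Hala; replace (k * t * (1 * 1)) with (k * t) by ring; rewrite Hkt.
    destruct alpha; cx_unfold; f_equal; ring.
Qed.

Lemma exists_param_small (D m : R) : 0 < m -> 2 * m <= D ->
  exists t y, 0 < t <= 1 /\ 0 <= y /\ t * (1 - t) = y * y /\ D * y = m.
Proof.
  intros Hm HD.
  set (y := m / D).
  assert (HyD : D * y = m) by (unfold y; field; lra).
  assert (Hy : 0 < y) by (apply Rdiv_lt_0_compat; lra).
  assert (Hy2 : 2 * y <= 1) by nra.
  set (s := sqrt (1 - 4 * (y * y))).
  assert (Hs : s * s = 1 - 4 * (y * y)) by (apply sqrt_sqrt; nra).
  assert (Hs0 : 0 <= s) by apply sqrt_pos.
  exists ((1 - s) / 2), y; repeat split; nra.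
Qed.

(* [t = (1 + del / N) / 2] gives [y = D / (2 N)] since [N^2 = D^2 + del^2]. *)
Lemma exists_param_large (D N del m : R) : 0 <= del -> 0 <= D -> 0 <= N ->
  N * N = D * D + del * del -> D < 2 * m -> m <= (N + del) / 2 ->
  exists t y, 0 < t <= 1 /\ 0 <= y /\ t * (1 - t) = y * y /\ Rabs (D * y - m) <= del * t.
Proof.
  intros Hdel HD HN HN2 Hm Hmax.
  assert (HdN : del <= N) by nra.
  assert (HN0 : 0 < N) by lra.
  exists ((1 + del / N) / 2), (D / (2 * N)).
  assert (Hq : del / N <= 1) by (apply Rdiv_le1_iff; lra).
  assert (Hq0 : 0 <= del / N) by (apply Rmult_le_pos; [lra | left; apply Rinv_0_lt_compat, HN0]).
  repeat split; try lra.
  - apply Rmult_le_pos; [lra | left; apply Rinv_0_lt_compat; lra].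
  - apply (Rmult_eq_reg_r (4 * (N * N))); [|nra].
    field_simplify; [|lra..]. nra.
  - apply Rabs_le; split; apply (Rmult_le_reg_r (2 * N)); try nra;
      field_simplify; try lra; nra.
Qed.

Lemma Kbound_contraction l1 l2 a : in_closed_disc l1 -> in_closed_disc l2 ->
  Cmod a <= Kbound l1 l2 -> exists A, opnorm_le A 1 /\ piA A = (a, Cadd l1 l2, Cmul l1 l2).
Proof.
  intros H1 H2 Ha.
  pose proof (Cnorm2_le1 _ H1); pose proof (Cnorm2_le1 _ H2).
  destruct (classic (a = Czero)) as [-> | Ha0].
  { exists (M2tri l1 Czero l2); split.
    - apply opnorm_le1_tri; try assumption.
      replace (Cnorm2 Czero) with 0 by (cx_unfold; ring); apply Rmult_le_pos; lra.
    - unfold piA, M2tri, M2tr, M2det; simpl; f_equal.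
      destruct l1, l2; cx_unfold; f_equal; ring. }
  pose proof (Cmod_pos _ Ha0).
  set (D := Cmod (Csub l1 l2)); assert (HD : 0 <= D) by apply Cmod_ge0.
  pose proof (defect_ge0 l1 l2).
  destruct (Rle_dec (2 * Cmod a) D) as [Hsmall | Hlarge].
  - destruct (exists_param_small D (Cmod a)) as [t [y [Ht [Hy [Hty HDy]]]]]; try lra.
    apply (contraction_of_param l1 l2 a t y); try assumption.
    fold D; rewrite HDy, Rminus_diag, Rabs_R0; apply Rmult_le_pos; lra.
  - destruct (exists_param_large D (Cmod (Csub Cone (Cmul (Cconj l2) l1))) (defect l1 l2) (Cmod a))
      as [t [y [Ht [Hy [Hty Hb]]]]]; try lra.
    + apply Cmod_ge0.
    + unfold D; rewrite !Cmod_sqr, Cnorm2_one_sub_conj_mul, defect_sqr by assumption.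
      reflexivity.
    + unfold Kbound in Ha; lra.
    + exact (contraction_of_param l1 l2 a t y H1 H2 Ha0 Ht Hy Hty Hb).
Qed.

(** * The beta formula *)

Section BetaIdentities.
Variables l1 l2 : Cx.
Let s := Cadd l1 l2.
Let p := Cmul l1 l2.
Let X := Csub s (Cmul (Cconj s) p).

Lemma sqr_one_sub_Cnorm2_p :
  (1 - Cnorm2 p) * (1 - Cnorm2 p) - Cnorm2 X =
  (1 - Cnorm2 l1) * (1 - Cnorm2 l2) * Cnorm2 (Csub Cone (Cmul (Cconj l2) l1)).
Proof. unfold X, s, p; destruct l1, l2; cx_unfold; ring. Qed.

Lemma Cnorm2_beta_numerator (del N : R) :
  del * del = (1 - Cnorm2 l1) * (1 - Cnorm2 l2) ->
  N * N = Cnorm2 (Csub Cone (Cmul (Cconj l2) l1)) ->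
  Cnorm2 (Csub (RtoC (2 * (1 - Cnorm2 p + del * N))) (Cmul s (Cconj X))) =
  ((N + del) * (1 - Cnorm2 p + del * N)) * ((N + del) * (1 - Cnorm2 p + del * N)).
Proof.
  unfold X, s, p; intros Hdel HN; destruct l1 as [x1 y1], l2 as [x2 y2]; cx_unfold; nsatz.
Qed.

End BetaIdentities.

Definition beta_expr (s beta : Cx) : Cx :=
  Csub Cone (Cdiv (Cmul (Cmul (RtoC (1 / 2)) s) (Cconj beta))
                  (RtoC (1 + sqrt (1 - Cnorm2 beta)))).

Lemma Cnorm2_parallelogram z w :
  Cnorm2 (Cadd z w) + Cnorm2 (Csub z w) = 2 * (Cnorm2 z + Cnorm2 w).
Proof. destruct z, w; cx_unfold; ring. Qed.

Lemma Cmod_beta_expr_unimodular l1 l2 : Cnorm2 l1 = 1 -> Cnorm2 l2 = 1 ->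
  Cmod (beta_expr (Cadd l1 l2) (Cmul (RtoC (1 / 2)) (Cadd l1 l2))) = Kbound l1 l2.
Proof.
  intros E1 E2.
  set (beta := Cmul (RtoC (1 / 2)) (Cadd l1 l2)).
  assert (Hb : Cnorm2 beta <= 1).
  { apply Cnorm2_le1; unfold beta; rewrite Cmod_mul, Cmod_RtoC by lra.
    pose proof (Cmod_triangle l1 l2); rewrite (Cmod_eq l1 1), (Cmod_eq l2 1) in * by lra; lra. }
  set (sg := sqrt (1 - Cnorm2 beta)).
  assert (Hsg : sg * sg = 1 - Cnorm2 beta) by (apply sqrt_sqrt; lra).
  assert (Hsg0 : 0 <= sg) by apply sqrt_pos.
  assert (E : beta_expr (Cadd l1 l2) beta = RtoC sg).
  { unfold beta_expr; change (Cmul (RtoC (1 / 2)) (Cadd l1 l2)) with beta; fold sg.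
    replace (Cdiv (Cmul beta (Cconj beta)) (RtoC (1 + sg))) with (RtoC (Cnorm2 beta / (1 + sg)))
      by (destruct beta; cx_unfold; f_equal; field; nra).
    cx_unfold; f_equal; [|ring].
    apply (Rmult_eq_reg_r (1 + sg)); [|lra]; field_simplify; nra. }
  rewrite E, Cmod_RtoC by exact Hsg0.
  unfold Kbound, defect; rewrite E1, Rminus_diag, sqrt_0, Rmult_0_l, Rmult_0_r, Rplus_0_r.
  apply (Rsqr_inj sg); [exact Hsg0 | pose proof (Cmod_ge0 (Csub Cone (Cmul (Cconj l2) l1))); lra|].
  unfold Rsqr; rewrite Hsg.
  replace (1 / 2 * Cmod (Csub Cone (Cmul (Cconj l2) l1)) * (1 / 2 * Cmod (Csub Cone (Cmul (Cconj l2) l1))))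
    with (1 / 4 * Cnorm2 (Csub Cone (Cmul (Cconj l2) l1))) by (rewrite <- Cmod_sqr; field).
  unfold beta; rewrite Cnorm2_mul, Cnorm2_RtoC.
  rewrite Cnorm2_one_sub_conj_mul, E1, E2.
  pose proof (Cnorm2_parallelogram l1 l2); lra.
Qed.

(* Off the torus [beta = X / (1 - |p|^2)] with [X = s - conj(s) p], and the two
   identities above evaluate [sqrt (1 - |beta|^2)] and the modulus. *)
Lemma Cmod_beta_expr_interior l1 l2 beta : in_closed_disc l1 -> in_closed_disc l2 ->
  Cnorm2 (Cmul l1 l2) < 1 ->
  Cadd l1 l2 = Cadd beta (Cmul (Cconj beta) (Cmul l1 l2)) ->
  Cmod (beta_expr (Cadd l1 l2) beta) = Kbound l1 l2.
Proof.
  intros H1 H2 HP Hsb.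
  pose proof (defect_ge0 l1 l2) as Hd0; pose proof (defect_sqr l1 l2 H1 H2) as Hd2.
  pose proof (sqr_one_sub_Cnorm2_p l1 l2) as Hden.
  pose proof (Cmod_ge0 (Csub Cone (Cmul (Cconj l2) l1))) as HN0.
  pose proof (Cmod_sqr (Csub Cone (Cmul (Cconj l2) l1))) as HN2.
  pose proof (Cnorm2_beta_numerator l1 l2 _ _ Hd2 HN2) as Hnum.
  pose proof (Cnorm2_ge0 (Cmul l1 l2)) as HP0.
  rewrite <- Hd2, <- HN2 in Hden.
  set (s := Cadd l1 l2) in *; set (p := Cmul l1 l2) in *; set (P := Cnorm2 p) in *.
  set (X := Csub s (Cmul (Cconj s) p)) in *.
  set (N := Cmod (Csub Cone (Cmul (Cconj l2) l1))) in *; set (del := defect l1 l2) in *.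
  assert (HbX : beta = Cmul X (RtoC (1 / (1 - P)))).
  { assert (HP1 : 1 - Cnorm2 p <> 0) by (unfold P in HP; lra).
    unfold X; rewrite Hsb at 1 2; unfold P.
    destruct beta, p; cx_unfold; f_equal; field; lra. }
  assert (HbN : Cnorm2 beta * ((1 - P) * (1 - P)) = Cnorm2 X)
    by (rewrite HbX, Cnorm2_mul, Cnorm2_RtoC; field; lra).
  assert (Hsq : sqrt (1 - Cnorm2 beta) = del * N / (1 - P)).
  { apply sqrt_eq_of_sqr; [apply Rmult_le_pos; [nra | left; apply Rinv_0_lt_compat; lra]|].
    apply (Rmult_eq_reg_r ((1 - P) * (1 - P))); [|nra].
    field_simplify; [|lra]. nra. }
  assert (E : beta_expr s beta =
              Cmul (Csub (RtoC (2 * (1 - P + del * N))) (Cmul s (Cconj X)))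
                   (RtoC (1 / (2 * (1 - P + del * N))))).
  { unfold beta_expr; rewrite Hsq, HbX.
    assert (0 < 1 - P + del * N) by nra.
    replace (1 + del * N / (1 - P)) with ((1 - P + del * N) / (1 - P)) by (field; lra).
    destruct s, X; cx_unfold; f_equal; field; nra. }
  rewrite E, Cmod_mul, Cmod_RtoC by (apply Rmult_le_pos; [lra | left; apply Rinv_0_lt_compat; nra]).
  rewrite (Cmod_eq _ ((N + del) * (1 - P + del * N))) by (exact Hnum || nra).
  unfold Kbound; fold N del; field; nra.
Qed.

Lemma Cmod_beta_expr l1 l2 beta : in_closed_disc l1 -> in_closed_disc l2 ->
  Cadd l1 l2 = Cadd beta (Cmul (Cconj beta) (Cmul l1 l2)) ->
  (Cmod (Cmul l1 l2) = 1 -> beta = Cmul (RtoC (1 / 2)) (Cadd l1 l2)) ->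
  Cmod (beta_expr (Cadd l1 l2) beta) = Kbound l1 l2.
Proof.
  intros H1 H2 Hsb Hp.
  pose proof (Cnorm2_le1 _ H1); pose proof (Cnorm2_le1 _ H2).
  pose proof (Cnorm2_ge0 l1); pose proof (Cnorm2_ge0 l2).
  destruct (Req_dec (Cnorm2 (Cmul l1 l2)) 1) as [E | E]; rewrite Cnorm2_mul in E.
  - rewrite Hp by (apply Cmod_eq; [lra | rewrite Cnorm2_mul, E; ring]).
    apply Cmod_beta_expr_unimodular; apply Rle_antisym; nra.
  - apply Cmod_beta_expr_interior; try assumption.
    rewrite Cnorm2_mul; nra.
Qed.

Theorem theorem5p3 (l1 l2 s p beta a : Cx)
  (hl1 : in_closed_disc l1) (hl2 : in_closed_disc l2)
  (hs : s = Cadd l1 l2) (hp : p = Cmul l1 l2)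
  (hbeta : Cmod beta <= 1)
  (hsb : s = Cadd beta (Cmul (Cconj beta) p))
  (hbeta_p : Cmod p = 1 -> beta = Cmul (RtoC (1/2)) s) :
  let s1 := in_closure in_P (a, s, p) in
  let s2 := in_closure in_Pmu (a, s, p) in
  let s3 := Cmod a <= Cmod (Csub Cone
              (Cdiv (Cmul (Cmul (RtoC (1/2)) s) (Cconj beta))
                    (RtoC (1 + sqrt (1 - Cnorm2 beta))))) in
  let s4 := Cmod a <= (1/2) * Cmod (Csub Cone (Cmul (Cconj l2) l1))
              + (1/2) * sqrt (1 - Cnorm2 l1) * sqrt (1 - Cnorm2 l2) in
  let s5 := forall z, in_open_disc z -> Cmod (Psi z a s p) <= 1 in
  let s6 := exists A, opnorm_le A 1 /\ piA A = (a, s, p) in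
  let s7 := exists A, muE_le1 A /\ piA A = (a, s, p) in
  (s1 <-> s2) /\ (s1 <-> s3) /\ (s1 <-> s4) /\ (s1 <-> s5) /\
  (s1 <-> s6) /\ (s1 <-> s7).
Proof.
  subst s p; intros s1 s2 s3 s4 s5 s6 s7.
  assert (H34 : s3 <-> s4).
  { pose proof (Cmod_beta_expr l1 l2 beta hl1 hl2 hsb hbeta_p) as E.
    unfold beta_expr, Kbound, defect in E; unfold s3, s4; rewrite E; split; intro; lra. }
  assert (H46 : s4 -> s6).
  { intro H; unfold s4 in H.
    apply Kbound_contraction; [exact hl1 | exact hl2 | unfold Kbound, defect; lra]. }
  assert (H61 : s6 -> s1)
    by (intros [A [HA Hpi]]; unfold s1; rewrite <- Hpi; apply opnorm_le1_in_closure_P, HA).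
  assert (H62 : s6 -> s2)
    by (intros [A [HA Hpi]]; unfold s2; rewrite <- Hpi; apply opnorm_le1_in_closure_Pmu, HA).
  assert (H67 : s6 -> s7)
    by (intros [A [HA Hpi]]; exists A; split; [apply opnorm_le1_muE_le1 |]; assumption).
  set (S := schwarz_bound a (Cadd l1 l2) (Cmul l1 l2)).
  assert (H7S : s7 -> S) by (intros [A [HA Hpi]]; exact (muE_le1_schwarz A _ _ _ HA Hpi)).
  assert (H1S : s1 -> S) by apply in_closure_schwarz, in_P_schwarz.
  assert (H2S : s2 -> S) by apply in_closure_schwarz, in_Pmu_schwarz.
  assert (H5S : s5 <-> S) by (symmetry; apply schwarz_bound_iff_Psi; assumption).
  assert (HS4 : S -> s4).
  { intro H; pose proof (schwarz_bound_Kbound a l1 l2 hl1 hl2 H) as HK.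
    unfold Kbound, defect in HK; unfold s4; lra. }
  tauto.
Qed.
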